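(* For every positive integer $n$, the number $v(n)$ is odd.
   Context: Let $A$ be a finite set of $n$ candidates. A voter is a linear order (ranking) of $A$, written as a permutation $x_1x_2\cdots x_n$ of $A$, meaning the voter prefers $x_i$ to $x_j$ iff $i<j$. A set of voters is a nonempty finite multiset of voters (several voters may have the same ranking). A strong preference pattern on $A$ is a tournament $T$ on vertex set $A$ (for each pair of distinct $a,b\in A$ exactly one of the arcs $(a,b)$, $(b,a)$ is present). A set of voters $U$ generates $T$ if for every pair of distinct candidates $a,b$, the arc $(a,b)$ is in $T$ if and only if strictly more voters of $U$ rank $a$ above $b$ than rank $b$ above $a$ (so in particular no pair is tied). For a tournament $T$, $v(T)$ denotes the minimum size of a set of voters generating $T$, and $v(n)=\max\{v(T): T \text{ a tournament on } n \text{ vertices}\}$. *)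

From mathcomp Require Import all_boot all_fingroup.
Set Implicit Arguments. Unset Strict Implicit. Unset Printing Implicit Defensive.

(* A voter (linear order on 'I_n) is encoded by its rank
   permutation r : {perm 'I_n}; r a is the position of candidate a
   (position 0 = most preferred). *)
Definition voter (n : nat) := {perm 'I_n}.

Definition prefers (n : nat) (a b : 'I_n) (r : voter n) : bool := r a < r b.

Definition tournament (n : nat) (T : rel 'I_n) : Prop :=
  (forall a, ~~ T a a) /\ (forall a b, a != b -> T a b = ~~ T b a).

(* A set of voters is a nonempty finite multiset, i.e. a nonempty seq. *)
Definition generates (n : nat) (U : seq (voter n)) (T : rel 'I_n) : Prop :=
  0 < size U /\
  forall a b : 'I_n, a != b ->
    T a b = (count (prefers b a) U < count (prefers a b) U).

Definition is_vT (n : nat) (T : rel 'I_n) (k : nat) : Prop :=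
  (exists U : seq (voter n), generates U T /\ size U = k) /\
  (forall U : seq (voter n), generates U T -> k <= size U).

Definition is_vn (n : nat) (m : nat) : Prop :=
  (exists T : rel 'I_n, tournament T /\ is_vT T m) /\
  (forall (T : rel 'I_n) (k : nat), tournament T -> is_vT T k -> k <= m).

From mathcomp Require Import all_boot all_fingroup.
From mathcomp Require Import zify.
From Stdlib Require Import Classical.
From Stdlib Require Wf_nat.

Set Implicit Arguments.
Unset Strict Implicit.
Unset Printing Implicit Defensive.

(* With an even number of voters, the two counts for a pair of candidates have
   the same parity; as a tournament has no ties, every majority then has margin
   at least two and survives the removal of any one voter.  So a minimum
   generating set is odd, i.e. v(T) is odd for every T.  The maximum v(n) exists
   because, by McGarvey's construction, every tournament on n candidates is
   generated by at most 2 + 2 n^2 voters: a voter and its reversal, and for each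
   arc (a, b) a voter who puts a, b on top together with its reversal modified to
   keep a above b; such a pair votes twice for a over b and splits evenly on every
   other pair. *)

Lemma exists_least_nat (P : nat -> Prop) :
  (exists k, P k) -> exists m, P m /\ forall k, P k -> m <= k.
Proof.
move=> exP.
have [m [[Pm m_min] _]] :=
  @Wf_nat.dec_inh_nat_subset_has_unique_least_element P (fun k => classic (P k)) exP.
by exists m; split=> // k /m_min /leP.
Qed.

Lemma exists_greatest_nat (P : nat -> Prop) (B : nat) :
  (exists k, P k) -> (forall k, P k -> k <= B) ->
  exists m, P m /\ forall k, P k -> k <= m.
Proof.
move=> [k Pk] le_B.
have [j [Pj j_min]] : exists j, P (B - j) /\ forall i, P (B - i) -> j <= i.
  by apply: exists_least_nat; exists (B - k); rewrite subKn ?le_B.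
exists (B - j); split=> // i Pi.
have := j_min (B - i); rewrite subKn ?le_B // => /(_ Pi).
have := le_B _ Pi; lia.
Qed.

Lemma prefers_swap n (x y : 'I_n) (r : voter n) :
  x != y -> prefers y x r = ~~ prefers x y r.
Proof.
move=> xy; rewrite /prefers.
have : nat_of_ord (r x) != r y by rewrite val_eqE (inj_eq perm_inj).
by case: ltngtP.
Qed.

Lemma count_prefers_swap n (x y : 'I_n) (s : seq (voter n)) :
  x != y -> count (prefers x y) s + count (prefers y x) s = size s.
Proof.
move=> xy; elim: s => [|r s IH] //=.
by rewrite (prefers_swap r xy); case: (prefers x y r) IH => /=; lia.
Qed.

Lemma generates_no_tie n (T : rel 'I_n) U x y : tournament T -> generates U T ->
  x != y -> count (prefers x y) U != count (prefers y x) U.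
Proof.
move=> [_ T_asym] [_ gen_U] xy; have yx : y != x by rewrite eq_sym.
have := T_asym x y xy; rewrite (gen_U x y xy) (gen_U y x yx).
by case: ltngtP.
Qed.

Lemma generates_behead n (T : rel 'I_n) u U : tournament T ->
  generates (u :: U) T -> odd (size U) -> generates U T.
Proof.
move=> tour_T gen_uU odd_U; split; first by case: (size U) odd_U.
move=> x y xy; case: (gen_uU) => _ /(_ x y xy) ->.
have := generates_no_tie tour_T gen_uU xy; rewrite /= (prefers_swap u xy).
rewrite -(count_prefers_swap U xy) in odd_U; move: odd_U.
case: (prefers x y u) => /=; move: (count _ U) (count _ U) => a b odd_ab tie;
  apply/idP/idP; lia.
Qed.

Lemma is_vT_odd n (T : rel 'I_n) k : tournament T -> is_vT T k -> odd k.
Proof.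
move=> tour_T [[[|u U] [gen_uU <-]] vT_min]; first by case: gen_uU.
apply: contraT => /= even_U.
have := vT_min U (generates_behead tour_T gen_uU (negbNE even_U)) => /=; lia.
Qed.

Lemma exists_is_vT n (T : rel 'I_n) U : generates U T -> exists k, is_vT T k.
Proof.
move=> gen_U.
have [k [[V [gen_V <-]] V_min]] :=
  @exists_least_nat (fun k => exists V, generates V T /\ size V = k)
    (ex_intro _ _ (ex_intro _ U (conj gen_U erefl))).
by exists (size V); split=> [|W gen_W]; [exists V | apply: V_min; exists W].
Qed.

Definition rev_perm n : {perm 'I_n} := perm (@rev_ord_inj n).

Lemma rev_permE n (i : 'I_n) : rev_perm n i = rev_ord i.
Proof. exact: permE. Qed.

Lemma ltn_rev_ord n (i j : 'I_n) : (rev_ord i < rev_ord j) = (j < i).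
Proof. by rewrite /= ltn_sub2lE ?ltnS ?ltn_ord. Qed.

Lemma tperm_succ_ltn n (p q u v : 'I_n) : q = p.+1 :> nat ->
  (u, v) != (p, q) -> (u, v) != (q, p) -> u != v ->
  (tperm p q u < tperm p q v) = (u < v).
Proof.
move=> qE; rewrite !xpair_eqE.
by case: tpermP => [->|->|/eqP + /eqP +]; case: tpermP => [->|->|/eqP + /eqP +];
  rewrite -!val_eqE /=; lia.
Qed.

Definition arcs n (T : rel 'I_n) : seq ('I_n * 'I_n) :=
  enum [pred ab : 'I_n * 'I_n | T ab.1 ab.2].

Lemma count_arcs n (T : rel 'I_n) x y : count (pred1 (x, y)) (arcs T) = T x y.
Proof. by rewrite count_uniq_mem ?enum_uniq // mem_enum. Qed.

Lemma arcs_offdiag n (T : rel 'I_n) : (forall a, ~~ T a a) ->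
  all (fun ab : 'I_n * 'I_n => ab.1 != ab.2) (arcs T).
Proof.
move=> T_irr; apply/allP => -[a b]; rewrite mem_enum /=.
by apply: contraTN => /eqP ->; rewrite T_irr.
Qed.

Section McGarvey.
Variable m : nat.
Local Notation n := m.+2.

Let first : 'I_n := ord0.
Let second : 'I_n := Ordinal (isT : 1 < n).

Definition lead_voter (a b : 'I_n) : voter n :=
  (tperm a first * tperm (tperm a first b) second)%g.

(* Reverses lead_voter a b except on the pair {a, b}: a and b end up at the
   bottom, still with a above b. *)
Definition trail_voter (a b : 'I_n) : voter n :=
  (lead_voter a b * rev_perm n * tperm (rev_ord second) (rev_ord first))%g.

Lemma lead_voter_l a b : a != b -> lead_voter a b a = first.
Proof.
move=> ab; rewrite permM tpermL (@tpermD _ _ second) //.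
by rewrite -[X in _ != X](tpermL a first) (inj_eq perm_inj) eq_sym.
Qed.

Lemma lead_voter_r a b : lead_voter a b b = second.
Proof. by rewrite permM tpermL. Qed.

Lemma trail_voterE a b x : trail_voter a b x =
  tperm (rev_ord second) (rev_ord first) (rev_ord (lead_voter a b x)).
Proof. by rewrite /trail_voter !permM rev_permE. Qed.

Lemma prefers_arc_pair a b x y : a != b -> x != y ->
  prefers x y (lead_voter a b) + prefers x y (trail_voter a b) + ((x, y) == (b, a))
  = 1 + ((x, y) == (a, b)).
Proof.
move=> ab xy; have [[-> ->]|not_ab] := eqVneq (x, y) (a, b).
  rewrite /prefers !trail_voterE xpair_eqE (negbTE ab) lead_voter_l ?lead_voter_r //.
  by rewrite tpermL tpermR ltn_rev_ord.
have [ba|not_ba] := eqVneq (x, y) (b, a).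
  case: ba => -> ->; rewrite /prefers !trail_voterE lead_voter_l ?lead_voter_r //.
  by rewrite tpermL tpermR /=; lia.
have rev_lead_pair c d e f :
    ((rev_ord (lead_voter a b c), rev_ord (lead_voter a b d))
      == (rev_ord (lead_voter a b e), rev_ord (lead_voter a b f))) = ((c, d) == (e, f)).
  by rewrite !xpair_eqE !(inj_eq rev_ord_inj) !(inj_eq perm_inj).
have trail_swap : prefers x y (trail_voter a b) = prefers y x (lead_voter a b).
  rewrite /prefers !trail_voterE tperm_succ_ltn ?ltn_rev_ord //.
  - by rewrite /=; lia.
  - by rewrite -(lead_voter_l ab) -(lead_voter_r a b) rev_lead_pair.
  - by rewrite -(lead_voter_l ab) -(lead_voter_r a b) rev_lead_pair.
  - by rewrite (inj_eq rev_ord_inj) (inj_eq perm_inj).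
by rewrite trail_swap (prefers_swap _ xy); case: prefers.
Qed.

Definition arc_voters (s : seq ('I_n * 'I_n)) : seq (voter n) :=
  flatten [seq [:: lead_voter ab.1 ab.2; trail_voter ab.1 ab.2] | ab <- s].

Lemma size_arc_voters s : size (arc_voters s) = 2 * size s.
Proof. by elim: s => //= ab s IH; rewrite IH mulnS. Qed.

Lemma count_prefers_arc_voters s x y :
  x != y -> all (fun ab : 'I_n * 'I_n => ab.1 != ab.2) s ->
  count (prefers x y) (arc_voters s) + count (pred1 (y, x)) s
  = size s + count (pred1 (x, y)) s.
Proof.
move=> xy; elim: s => //= -[a b] s IH /andP[/= ab /IH {}IH].
have -> : ((a, b) == (y, x)) = ((x, y) == (b, a)).
  by rewrite !xpair_eqE andbC ![b == _]eq_sym ![a == _]eq_sym.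
have -> : ((a, b) == (x, y)) = ((x, y) == (a, b)) by rewrite eq_sym.
have := prefers_arc_pair ab xy; rewrite -/(arc_voters s).
by set ba := (_ == (b, a)); set ab' := (_ == (a, b)); lia.
Qed.

Definition mcgarvey_profile (T : rel 'I_n) : seq (voter n) :=
  1%g :: rev_perm n :: arc_voters (arcs T).

Lemma mcgarvey_profile_generates T : tournament T -> generates (mcgarvey_profile T) T.
Proof.
move=> [T_irr T_asym]; split=> // x y xy.
have yx : y != x by rewrite eq_sym.
have offdiag := arcs_offdiag T_irr.
have := count_prefers_arc_voters xy offdiag.
have := count_prefers_arc_voters yx offdiag.
rewrite /= !count_arcs /prefers !rev_permE !perm1 !ltn_rev_ord.
have := T_asym x y xy; have : nat_of_ord x != y by [].
by case: (T x y); case: (T y x) => //=; lia.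
Qed.

Lemma size_mcgarvey_profile T : size (mcgarvey_profile T) <= 2 + 2 * n ^ 2.
Proof.
rewrite /= size_arc_voters /arcs -cardE.
have := max_card [pred ab : 'I_n * 'I_n | T ab.1 ab.2].
by rewrite card_prod card_ord; lia.
Qed.
End McGarvey.

Lemma tournament_generated_bounded n : exists B, forall T : rel 'I_n,
  tournament T -> exists U, generates U T /\ size U <= B.
Proof.
case: n => [|[|m]]; last first.
  exists (2 + 2 * m.+2 ^ 2) => T tour_T; exists (mcgarvey_profile T).
  by split; [apply: mcgarvey_profile_generates | apply: size_mcgarvey_profile].
all: exists 1 => T _; exists [:: 1%g]; do 2!split=> //.
all: by move=> [[|a] ha] [[|b] hb].
Qed.

Lemma ltn_tournament n : tournament (fun a b : 'I_n => a < b).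
Proof.
split=> [a|a b]; first by rewrite ltnn.
by rewrite -val_eqE; case: ltngtP.
Qed.

Theorem lemma1 (n : nat) : 0 < n -> exists m : nat, is_vn n m /\ odd m.
Proof.
move=> _; have [B bounded] := tournament_generated_bounded n.
have vT_le_B k : (exists T : rel 'I_n, tournament T /\ is_vT T k) -> k <= B.
  move=> [T [tour_T [_ vT_min]]]; have [U [gen_U size_U]] := bounded T tour_T.
  exact: leq_trans (vT_min U gen_U) size_U.
have [k vT_k] : exists k, is_vT (fun a b : 'I_n => a < b) k.
  by have [U [gen_U _]] := bounded _ (ltn_tournament n); apply: exists_is_vT gen_U.
have [v [[T [tour_T vT_v]] v_max]] := exists_greatest_nat
  (ex_intro _ k (ex_intro _ _ (conj (ltn_tournament n) vT_k))) vT_le_B.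
exists v; split; last exact: is_vT_odd tour_T vT_v.
by split=> [|T' k' tour_T' vT_k']; [exists T | apply: v_max; exists T'].
Qed.
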